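(* Let $G=SL(n,\mathbb{R})$, $u\in\mathcal{S}_n$, $x\in Y_{\ge u}$, $A=u^{-1}[xu^{-1}]_+u$, and $\nu=\mathrm{diag}(n,n-1,\dots,1)$. Then $\mathrm{str}(A^{-1}\nu A)\ge0$.
   Context: $B_-,H,N,N_-$ denote the lower-triangular, diagonal, unipotent upper triangular and unipotent lower triangular matrices. Elements of $W=\mathcal{S}_n$ are bijections of $\{1,\dots,n\}$, represented by permutation matrices $u$ with $ue_b=e_{u(b)}$ (computations in $GL(n,\mathbb{R})$). For a matrix $z$ admitting a Gaussian (LDU) decomposition $z=[z]_-[z]_0[z]_+$, $[z]_+$ is its unipotent upper triangular factor. $Y$ is the set of unipotent upper triangular real matrices all of whose minors are nonnegative; $Y^\circ_w=Y\cap B_-wB_-$, and $Y_{\ge u}=\bigcup_{w\ge u}Y^\circ_w$ with respect to the Bruhat order ($u\le w$ iff $B_-uB_-\subset\overline{B_-wB_-}$); for $x\in Y_{\ge u}$, $xu^{-1}$ has a Gaussian decomposition. For any $n\times n$ matrix $z$, $\mathrm{str}(z)=\sum_{i=1}^{n-1}z_{i,i+1}$. *)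

From HB Require Import structures.
From mathcomp Require Import all_boot all_order all_algebra all_fingroup.
From mathcomp Require Import reals.
Set Implicit Arguments. Unset Strict Implicit. Unset Printing Implicit Defensive.
Import Order.TTheory GRing.Theory Num.Theory.
Local Open Scope ring_scope.

Section Defs.
Variable R : realType.
Variable n : nat.

Definition pmat (u : 'S_n) : 'M[R]_n := \matrix_(i, j) (i == u j)%:R.

Definition is_lower (z : 'M[R]_n) : Prop := forall i j : 'I_n, (i < j)%N -> z i j = 0.
Definition is_upper (z : 'M[R]_n) : Prop := forall i j : 'I_n, (j < i)%N -> z i j = 0.
Definition is_diag (z : 'M[R]_n) : Prop := forall i j : 'I_n, i != j -> z i j = 0.
Definition unipotent_upper (z : 'M[R]_n) : Prop := is_upper z /\ forall i, z i i = 1.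
Definition unipotent_lower (z : 'M[R]_n) : Prop := is_lower z /\ forall i, z i i = 1.

Definition in_Bminus (b : 'M[R]_n) : Prop := is_lower b /\ b \in unitmx.

Definition bruhat_cell (w : 'S_n) (z : 'M[R]_n) : Prop :=
  exists b1 b2, in_Bminus b1 /\ in_Bminus b2 /\ z = b1 *m pmat w *m b2.

Definition in_closure (S : 'M[R]_n -> Prop) (z : 'M[R]_n) : Prop :=
  forall e : R, 0 < e -> exists y, S y /\ forall i j, `|z i j - y i j| < e.

Definition bruhat_le (u w : 'S_n) : Prop :=
  forall z, bruhat_cell u z -> in_closure (bruhat_cell w) z.

Definition strict_incr k (f : 'I_k -> 'I_n) : Prop :=
  forall a b : 'I_k, (a < b)%N -> (f a < f b)%N.

Definition totally_nonneg (z : 'M[R]_n) : Prop :=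
  forall k (f g : 'I_k -> 'I_n), strict_incr f -> strict_incr g ->
    0 <= \det (\matrix_(a, b) z (f a) (g b)).

Definition inY (x : 'M[R]_n) : Prop := unipotent_upper x /\ totally_nonneg x.

Definition inY_ge (u : 'S_n) (x : 'M[R]_n) : Prop :=
  exists w, bruhat_le u w /\ inY x /\ bruhat_cell w x.

(* Gaussian decomposition z = L D U; U is [z]_+ *)
Definition gauss_LDU (z L D U : 'M[R]_n) : Prop :=
  unipotent_lower L /\ is_diag D /\ unipotent_upper U /\ z = L *m D *m U.

Definition str (z : 'M[R]_n) : R :=
  \sum_(i : 'I_n) \sum_(j : 'I_n | val j == (val i).+1) z i j.

Definition nu : 'M[R]_n := diag_mx (\row_(i < n) (n - val i)%:R).

End Defs.

(* Write x P^-1 = L D U with P the permutation matrix of u, and put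
   Z = L^-1 x = D U P and W = Z^-1 = x^-1 L.  Then A = P^-1 D^-1 Z, so
   A^-1 nu A = W N Z with N = diag (n - u^-1 c), and as W Z = 1 its entry
   (i, i+1) is the sum over c of (i - u^-1 c) W_ic Z_c(i+1).  Each term is
   nonnegative.  Z P^-1 and P W are upper triangular, so only the c with
   u i < c <= u (i+1) contribute.  For those, Cramer's rule for the column c of W
   (from x W = L) and the Laplace expansion of Z along its row c express
   W_ic and Z_c(i+1) through minors of x on its first c or c+1 rows.  These
   minors are nonnegative, and positive on the columns u^-1 {0, ..., k-1}, so
   the sign of W_ic Z_c(i+1) is read off from the positions of i and i+1 in
   the two column sets: it is the sign of i - u^-1 c. *)

From HB Require Import structures.
From mathcomp Require Import all_boot all_order all_algebra all_fingroup.
From mathcomp Require Import reals.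
From mathcomp Require Import zify ring.
Set Implicit Arguments. Unset Strict Implicit. Unset Printing Implicit Defensive.
Import Order.TTheory GRing.Theory Num.Theory.
Local Open Scope ring_scope.

Lemma widen_ord_inj k m (hk : (k <= m)%N) : injective (widen_ord hk).
Proof. by move=> a b /(congr1 val) /= /val_inj. Qed.

Section IncreasingEnumerations.
Variable n : nat.

Lemma strict_incr_inj k (g : 'I_k -> 'I_n) : strict_incr g -> injective g.
Proof.
move=> hg a b gab; apply/val_inj; case: (ltngtP a b) => // [/hg|/hg];
  by rewrite gab ltnn.
Qed.

Lemma strict_incr_widen k (hk : (k <= n)%N) : strict_incr (widen_ord hk).
Proof. by []. Qed.

Lemma strict_incr_lift k (g : 'I_k.+1 -> 'I_n) (q : 'I_k.+1) :
  strict_incr g -> strict_incr (g \o lift q).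
Proof. by move=> hg a b ab; apply: hg; rewrite /= ltnNge leq_bump2 -ltnNge. Qed.

Lemma imset_lift k (g : 'I_k.+1 -> 'I_n) (q : 'I_k.+1) :
  injective g -> (g \o lift q) @: setT = (g @: setT) :\ g q.
Proof.
move=> gI; apply/setP => y; rewrite !inE.
apply/imsetP/andP => [[r _ ->]|[yq /imsetP[r _ ry]]].
  by rewrite /= (inj_eq gI) eq_sym neq_lift imset_f ?inE.
have [r' rr' | rq] := unliftP q r; first by exists r'; rewrite // ry rr'.
by rewrite ry rq eqxx in yq.
Qed.

Lemma card_ord_lt k m : (m <= k)%N -> #|[set q : 'I_k | (q < m)%N]| = m.
Proof.
move=> mk; rewrite -[RHS](card_ord m) -(card_imset _ (@widen_ord_inj m k mk)).
apply: eq_card => q; rewrite inE.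
apply/idP/imsetP => [qm|[r _ ->]]; last exact: (ltn_ord r).
by exists (Ordinal qm) => //; apply: val_inj.
Qed.

Definition card_below (S : {set 'I_n}) (t : nat) : nat := #|[set y in S | (y < t)%N]|.

Lemma card_below_strict_incr k (g : 'I_k -> 'I_n) (q : 'I_k) :
  strict_incr g -> card_below (g @: setT) (g q) = q.
Proof.
move=> hg; rewrite -[RHS](card_ord_lt (ltnW (ltn_ord q))).
rewrite -(card_imset _ (strict_incr_inj hg)); apply: eq_card => y; rewrite !inE.
apply/andP/imsetP => [[/imsetP[r _ ->] rq]|[r]]; last first.
  by rewrite inE => rq ->; rewrite imset_f ?inE ?hg.
exists r => //; rewrite inE; case: (ltngtP r q) => [//|/hg qr|/val_inj rq'].
  by have := ltn_trans qr rq; rewrite ltnn.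
by move: rq; rewrite rq' ltnn.
Qed.

Lemma card_below_setU1 (S : {set 'I_n}) a t :
  a \notin S -> card_below (a |: S) t = (card_below S t + (a < t))%N.
Proof.
move=> aS; rewrite /card_below; case: (ltnP a t) => hat /=.
  have -> : [set y in a |: S | (y < t)%N] = a |: [set y in S | (y < t)%N].
    by apply/setP => y; rewrite !inE; case: eqVneq => // ->; rewrite hat.
  by rewrite cardsU1 inE (negbTE aS) addn1.
rewrite addn0; apply: eq_card => y; rewrite !inE.
by case: eqVneq => // ->; rewrite (negbTE aS) ltnNge hat.
Qed.

Lemma card_below_succ (S : {set 'I_n}) (t : 'I_n) :
  card_below S t.+1 = (card_below S t + (t \in S))%N.
Proof.
have below_succ (y : 'I_n) : (y < t.+1)%N = (y == t) || (y < t)%N by rewrite ltnS leq_eqVlt.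
rewrite /card_below; case: (boolP (t \in S)) => tS /=.
  have -> : [set y in S | (y < t.+1)%N] = t |: [set y in S | (y < t)%N].
    by apply/setP => y; rewrite !inE below_succ; case: (eqVneq y t) => [->|_]; rewrite ?tS.
  by rewrite cardsU1 !inE ltnn andbF addn1.
rewrite addn0; apply: eq_card => y; rewrite !inE below_succ.
by case: (eqVneq y t) => [->|_]; rewrite ?(negbTE tS).
Qed.

Lemma sorted_enum_ord (S : {set 'I_n}) : sorted (relpre val ltn) (enum S).
Proof.
have ord_sorted : sorted (relpre val ltn) (enum 'I_n).
  by rewrite -sorted_map val_enum_ord iota_ltn_sorted.
rewrite /enum_mem -enumT; apply: sorted_filter ord_sorted.
by move=> a b c /=; apply: ltn_trans.
Qed.

Lemma strict_incr_enum (S : {set 'I_n}) k :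
  #|S| = k -> exists2 g : 'I_k -> 'I_n, strict_incr g & g @: setT = S.
Proof.
move=> <-; exists enum_val; last first.
  apply/setP => y; apply/imsetP/idP => [[i _ ->]|yS]; first exact: enum_valP.
  by exists (enum_rank_in yS y); rewrite ?enum_rankK_in.
move=> a b ab; have y0 := enum_val a.
rewrite (enum_val_nth y0 a) (enum_val_nth y0 b).
apply: (sorted_ltn_nth _ _ (sorted_enum_ord S)); rewrite ?inE -?cardE //.
by move=> ? ? ? /=; apply: ltn_trans.
Qed.

Lemma strict_incr_enum_at (S : {set 'I_n}) k t : #|S| = k -> t \in S ->
  exists g : 'I_k -> 'I_n, exists q : 'I_k,
    [/\ strict_incr g, g @: setT = S, g q = t & q = card_below S t :> nat].
Proof.
move=> Sk tS; have [g g_incr g_im] := strict_incr_enum Sk.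
have /imsetP[q _ tE] : t \in g @: setT by rewrite g_im.
by exists g, q; split; rewrite // tE -g_im card_below_strict_incr.
Qed.

End IncreasingEnumerations.

Section Cofactors.
Variable R : comNzRingType.

Lemma mxsub_mulmx_supp m m' n p p' k (A : 'M[R]_(m, n)) (B : 'M_(n, p))
    (f : 'I_m' -> 'I_m) (g : 'I_k -> 'I_n) (h : 'I_p' -> 'I_p) :
  injective g -> (forall a b j, j \notin g @: setT -> A (f a) j * B j (h b) = 0) ->
  mxsub f h (A *m B) = mxsub f g A *m mxsub g h B.
Proof.
move=> gI hAB; apply/matrixP => a b; rewrite !mxE (bigID (mem (g @: setT))) /=.
rewrite [X in _ + X]big1 ?addr0 => [|j /hAB //].
rewrite big_imset /=; last by move=> ? ? _ _ /gI.
by apply: eq_big => [q|q _]; rewrite ?inE ?mxE.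
Qed.

Lemma det_mul_cofactor k (M : 'M[R]_k) (w : 'cV_k) i j :
  M *m w = delta_mx i 0 -> \det M * w j 0 = cofactor M i j.
Proof.
move=> Mw; have := congr1 (mulmx (\adj M)) Mw.
rewrite mulmxA mul_adj_mx mul_scalar_mx -colE => /(congr1 (fun N : 'cV_k => N j 0)).
by rewrite !mxE => ->.
Qed.

Lemma expand_det_row_lift k (M : 'M[R]_k) i j0 :
  (forall j, M i (lift j0 j) = 0) -> \det M = M i j0 * cofactor M i j0.
Proof.
move=> M0; rewrite (expand_det_row _ i) (bigD1 j0) //= big1 ?addr0 // => j.
by case: (unliftP j0 j) => [j' -> _|->]; rewrite ?M0 ?mul0r ?eqxx.
Qed.

Lemma cofactor_mxsub_widen n k (hk : (k < n)%N) (g : 'I_k.+1 -> 'I_n) (M : 'M[R]_n) q :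
  cofactor (mxsub (widen_ord hk) g M) ord_max q =
  (-1) ^+ (k + q) * \det (mxsub (widen_ord (ltnW hk)) (g \o lift q) M).
Proof.
rewrite /cofactor; congr (_ * \det _); apply/matrixP => a b; rewrite !mxE.
by congr (M _ _); apply: val_inj; rewrite /= /bump leqNgt ltn_ord.
Qed.

Lemma mulmx_diag_entry_shift n (W Z : 'M[R]_n) (d : 'rV[R]_n) t i j :
  W *m Z = 1%:M -> i != j ->
  (W *m diag_mx d *m Z) i j = \sum_c (d 0 c - t) * (W i c * Z c j).
Proof.
move=> WZ ij; have WZij : \sum_c W i c * Z c j = 0.
  by have := congr1 (fun M : 'M[R]_n => M i j) WZ; rewrite !mxE (negbTE ij) mulr0n.
transitivity ((W *m diag_mx d *m Z) i j - t * \sum_c W i c * Z c j).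
  by rewrite WZij mulr0 subr0.
rewrite mulr_sumr mxE -sumrB.
by apply: eq_bigr => c _; rewrite mul_mx_diag !mxE; ring.
Qed.

End Cofactors.

Lemma mulmx1_invmx (R : comUnitRingType) n (A B : 'M[R]_n) :
  A *m B = 1%:M -> invmx A = B.
Proof.
move=> AB; have [Au _] := mulmx1_unit AB.
by rewrite -[LHS]mulmx1 -AB mulmxA mulVmx ?mul1mx.
Qed.

Lemma sign_of_cramer_pair (R : realFieldType) (a b m1 m2 w z : R) (s t : nat) :
  0 < a -> 0 < b -> 0 <= m1 -> 0 <= m2 ->
  a * w = (-1) ^+ s * m1 -> m2 = (-1) ^+ t * z * b -> 0 <= (-1) ^+ (s + t) * (w * z).
Proof.
move=> a_gt0 b_gt0 m1_ge0 m2_ge0 aw m2E; rewrite -(pmulr_rge0 _ (mulr_gt0 a_gt0 b_gt0)).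
have sq k : (-1) ^+ k * (-1) ^+ k = 1 :> R.
  by rewrite -exprD -signr_odd addnn odd_double.
have -> : a * b * ((-1) ^+ (s + t) * (w * z)) = (-1) ^+ s * (a * w) * ((-1) ^+ t * z * b).
  by rewrite exprD; ring.
by rewrite aw -m2E mulrA sq mul1r mulr_ge0.
Qed.

Section Triangular.
Variable R : realType.

Lemma det_unipotent_upper n (M : 'M[R]_n) : unipotent_upper M -> \det M = 1.
Proof.
case=> Mup Md; rewrite -det_tr det_trig.
  by rewrite big1 // => i _; rewrite mxE Md.
by apply/is_trig_mxP => i j ij; rewrite mxE Mup.
Qed.

Lemma det_unipotent_lower n (M : 'M[R]_n) : unipotent_lower M -> \det M = 1.
Proof.
case=> Mlo Md; rewrite det_trig.
  by rewrite big1 // => i _; rewrite Md.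
by apply/is_trig_mxP => i j ij; rewrite Mlo.
Qed.

Lemma det_mxsub_widen_unipotent_lower n (L : 'M[R]_n) k (hk : (k <= n)%N) :
  unipotent_lower L -> \det (mxsub (widen_ord hk) (widen_ord hk) L) = 1.
Proof.
case=> Llo Ld; apply: det_unipotent_lower.
by split=> [a b ab|a]; rewrite mxE; [apply: Llo | apply: Ld].
Qed.

Lemma det_mxsub_unipotent_lower_mul n (L N : 'M[R]_n) k (hk : (k <= n)%N) g :
  unipotent_lower L ->
  \det (mxsub (widen_ord hk) g (L *m N)) = \det (mxsub (widen_ord hk) g N).
Proof.
move=> L_unip; rewrite (mxsub_mulmx_supp (g := widen_ord hk)) ?det_mulmx.
- by rewrite det_mxsub_widen_unipotent_lower ?mul1r.
- exact: widen_ord_inj.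
move=> a b j jk; case: L_unip => Llo _; rewrite Llo ?mul0r //.
apply: leq_trans (ltn_ord a) _; rewrite leqNgt; apply: contra jk => jk.
by apply/imsetP; exists (Ordinal jk) => //; apply: val_inj.
Qed.

Lemma upper_mulmx_eq1 n (V X : 'M[R]_n) :
  is_upper V -> V *m X = 1%:M -> is_upper X.
Proof.
move=> Vup VX.
have Vd i : V i i != 0.
  have [+ _] := mulmx1_unit VX; rewrite unitmxE unitfE -det_tr det_trig.
    by move/prodf_neq0/(_ i isT); rewrite mxE.
  by apply/is_trig_mxP => a b ab; rewrite mxE Vup.
suff H m (r c : 'I_n) : (n - r <= m)%N -> (c < r)%N -> X r c = 0 by move=> r c; apply: H.
elim: m r => [|m IH] r hm cr; first by have := ltn_ord r; lia.
have /eqP := congr1 (fun M : 'M[R]_n => M r c) VX; rewrite !mxE (bigD1 r) //=.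
rewrite big1 ?addr0 => [|k kr].
  have /negbTE -> : r != c by rewrite neq_ltn cr orbT.
  by rewrite mulr0n mulf_eq0 (negbTE (Vd r)) => /eqP.
case: (ltngtP k r) => [kr'|rk|/val_inj ek]; last by rewrite ek eqxx in kr.
  by rewrite Vup ?mul0r.
by rewrite (IH k) ?mulr0 //; lia.
Qed.

End Triangular.

Section PermutationMatrices.
Variables (R : realType) (n : nat).

Lemma pmatE (u : 'S_n) : pmat R u = perm_mx u^-1.
Proof. by apply/matrixP => i j; rewrite !mxE (canF_eq (permKV u)). Qed.

Lemma invmx_pmat (u : 'S_n) : invmx (pmat R u) = pmat R u^-1.
Proof. by apply: mulmx1_invmx; rewrite !pmatE -perm_mxM mulgV perm_mx1. Qed.

Lemma unitmx_pmat (u : 'S_n) : pmat R u \in unitmx.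
Proof. by rewrite pmatE unitmx_perm. Qed.

Lemma mulmx_pmatE (u : 'S_n) (M : 'M[R]_n) i j : (M *m pmat R u) i j = M i (u j).
Proof. by rewrite pmatE -col_permE mxE. Qed.

Lemma pmat_mulmxE (u : 'S_n) (M : 'M[R]_n) i j : (pmat R u *m M) i j = M ((u^-1)%g i) j.
Proof. by rewrite pmatE -row_permE mxE. Qed.

Lemma pmat_conj_diag (u : 'S_n) (d : 'rV[R]_n) :
  pmat R u *m diag_mx d *m invmx (pmat R u) = diag_mx (\row_i d 0 ((u^-1)%g i)).
Proof.
apply/matrixP => i j; rewrite invmx_pmat mulmx_pmatE pmat_mulmxE !mxE.
by rewrite (inj_eq perm_inj).
Qed.

End PermutationMatrices.

Section GaussianFactors.
Variables (R : realType) (n : nat) (u : 'S_n) (x L D U : 'M[R]_n).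
Hypothesis x_unip : unipotent_upper x.
Hypothesis x_LDU : gauss_LDU (x *m invmx (pmat R u)) L D U.

Let P := pmat R u.
Definition gaussZ := invmx L *m x.
Definition gaussW := invmx gaussZ.
Local Notation Z := gaussZ.
Local Notation W := gaussW.
Let preim_lt k := [set j : 'I_n | (u j < k)%N].

Lemma unitmx_L : L \in unitmx.
Proof. by case: x_LDU => L_unip _; rewrite unitmxE det_unipotent_lower ?unitr1. Qed.

Lemma unitmx_Z : Z \in unitmx.
Proof. by rewrite unitmx_mul unitmx_inv unitmx_L unitmxE det_unipotent_upper ?unitr1. Qed.

Lemma ZE : Z = D *m (U *m P).
Proof.
case: x_LDU => _ [_ [_ xE]].
by rewrite /gaussZ -[x](mulmxKV (unitmx_pmat R u)) xE -!mulmxA mulKmx ?unitmx_L.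
Qed.

Lemma mulmx_LZ : L *m Z = x.
Proof. by rewrite /gaussZ mulmxA mulmxV ?unitmx_L ?mul1mx. Qed.

Lemma mulmx_xW : x *m W = L.
Proof. by rewrite -mulmx_LZ -mulmxA mulmxV ?unitmx_Z ?mulmx1. Qed.

Lemma mulmx_WZ : W *m Z = 1%:M.
Proof. by rewrite mulVmx ?unitmx_Z. Qed.

Lemma D_diag : D = diag_mx (\row_i D i i).
Proof.
case: x_LDU => _ [Dd _]; apply/matrixP => i j; rewrite !mxE.
by case: (eqVneq i j) => [->|ij]; rewrite ?mulr1n // mulr0n Dd.
Qed.

Lemma unitmx_D : D \in unitmx.
Proof. by have := unitmx_Z; rewrite ZE unitmx_mul => /andP[]. Qed.

Lemma Z_eq0 (c j : 'I_n) : (u j < c)%N -> Z c j = 0.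
Proof.
case: x_LDU => _ [_ [[U_up _] _]] ujc.
by rewrite ZE mulmxA mulmx_pmatE D_diag mul_diag_mx mxE U_up ?mulr0.
Qed.

Lemma W_eq0 (j c : 'I_n) : (c < u j)%N -> W j c = 0.
Proof.
case: x_LDU => _ [_ [[U_up _] _]] cuj.
have DU_up : is_upper (D *m U).
  by move=> a b ba; rewrite D_diag mul_diag_mx mxE U_up ?mulr0.
have PW_up : is_upper (P *m W).
  apply: (upper_mulmx_eq1 DU_up).
  by rewrite mulmxA -[D *m U *m P]mulmxA -ZE mulmxV ?unitmx_Z.
by have := PW_up (u j) c cuj; rewrite pmat_mulmxE permK.
Qed.

Lemma conj_nu : let A := invmx P *m U *m P in
  invmx A *m nu R n *m A = W *m diag_mx (\row_c (n - (u^-1)%g c)%:R) *m Z.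
Proof.
move=> A; set N := diag_mx _.
have AE : A = invmx P *m invmx D *m Z by rewrite /A ZE -!mulmxA mulKmx ?unitmx_D.
have invA : invmx A = W *m D *m P.
  apply: mulmx1_invmx; rewrite AE -!mulmxA (mulmxA x) mulmx_xW.
  by rewrite !mulKmx ?unitmx_L ?unitmx_D // mulVmx ?unitmx_pmat.
have PnuP : P *m nu R n *m invmx P = N.
  by rewrite pmat_conj_diag; congr diag_mx; apply/rowP => c; rewrite !mxE.
have DN : D *m N = N *m D by rewrite D_diag diag_mx_comm.
rewrite invA AE !mulmxA -(mulmxA (W *m D)) -(mulmxA _ _ (invmx P)) PnuP.
by rewrite -(mulmxA W) DN mulmxA mulmxK ?unitmx_D.
Qed.

Lemma minor_xZ k (hk : (k <= n)%N) (g : 'I_k -> 'I_n) :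
  \det (mxsub (widen_ord hk) g x) = \det (mxsub (widen_ord hk) g Z).
Proof. by rewrite -{1}mulmx_LZ det_mxsub_unipotent_lower_mul //; case: x_LDU. Qed.

Lemma preim_lt_succ (c : 'I_n) : preim_lt c.+1 = (u^-1)%g c |: preim_lt c.
Proof.
by apply/setP => y; rewrite !inE ltnS leq_eqVlt -(canF_eq (permK u)).
Qed.

Lemma card_preim_lt k : (k <= n)%N -> #|preim_lt k| = k.
Proof.
have -> : preim_lt k = u @^-1: [set z : 'I_n | (z < k)%N] by apply/setP => y; rewrite !inE.
by move=> kn; rewrite card_preimset ?card_ord_lt //; apply: perm_inj.
Qed.

Lemma minor_neq0 k (hk : (k <= n)%N) (g : 'I_k -> 'I_n) :
  injective g -> g @: setT = preim_lt k -> \det (mxsub (widen_ord hk) g x) != 0.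
Proof.
move=> gI gS.
have LE : mxsub (widen_ord hk) (widen_ord hk) L =
          mxsub (widen_ord hk) g x *m mxsub g (widen_ord hk) W.
  rewrite -mulmx_xW; apply: mxsub_mulmx_supp gI _ => a b j.
  by rewrite gS inE -leqNgt => kj; rewrite W_eq0 ?mulr0 // (leq_trans (ltn_ord b)).
have := congr1 determinant LE; rewrite det_mulmx det_mxsub_widen_unipotent_lower.
  by apply: contra_eqN => /eqP ->; rewrite mul0r oner_neq0.
by case: x_LDU.
Qed.

Lemma minor_mul_W (c : 'I_n) (g : 'I_c.+1 -> 'I_n) q :
  injective g -> g @: setT = preim_lt c.+1 ->
  \det (mxsub (widen_ord (ltn_ord c)) g x) * W (g q) c =
  (-1) ^+ (c + q) * \det (mxsub (widen_ord (ltnW (ltn_ord c))) (g \o lift q) x).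
Proof.
move=> gI gS; rewrite -cofactor_mxsub_widen.
have Mw : mxsub (widen_ord (ltn_ord c)) g x *m mxsub g (fun _ : 'I_1 => c) W =
           delta_mx ord_max 0.
  rewrite -(mxsub_mulmx_supp gI) => [|a b j]; last first.
    by rewrite gS inE -leqNgt => /W_eq0 ->; rewrite mulr0.
  case: x_LDU => [[L_lo L_d] _]; apply/matrixP => a b.
  rewrite mulmx_xW !mxE ord1 eqxx andbT.
  case: (unliftP ord_max a) => [a' ->|->]; last first.
    by rewrite eqxx (_ : widen_ord _ _ = c) ?L_d //; apply: val_inj.
  have a'c : (a' < c)%N := ltn_ord a'.
  by rewrite lift_eqF L_lo //= /bump (leqNgt c) a'c.
by rewrite -(det_mul_cofactor q Mw) mxE.
Qed.

Lemma minor_expand_Z (c : 'I_n) (g : 'I_c.+1 -> 'I_n) q0 :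
  (forall q, (u (g (lift q0 q)) < c)%N) ->
  \det (mxsub (widen_ord (ltn_ord c)) g x) =
  (-1) ^+ (c + q0) * Z c (g q0) *
  \det (mxsub (widen_ord (ltnW (ltn_ord c))) (g \o lift q0) x).
Proof.
move=> gK; have wc : widen_ord (ltn_ord c) ord_max = c by apply: val_inj.
rewrite !minor_xZ (expand_det_row_lift (i := ord_max) (j0 := q0)) => [|q].
  by rewrite cofactor_mxsub_widen mxE wc mulrCA mulrA.
by rewrite mxE wc Z_eq0.
Qed.

Hypothesis x_tnn : totally_nonneg x.

Lemma minor_ge0 k (hk : (k <= n)%N) (g : 'I_k -> 'I_n) :
  strict_incr g -> 0 <= \det (mxsub (widen_ord hk) g x).
Proof. exact: x_tnn (strict_incr_widen hk). Qed.

Lemma minor_gt0 k (hk : (k <= n)%N) (g : 'I_k -> 'I_n) :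
  strict_incr g -> g @: setT = preim_lt k -> 0 < \det (mxsub (widen_ord hk) g x).
Proof.
by move=> g_incr gS; rewrite lt0r minor_ge0 // minor_neq0 //; apply: strict_incr_inj.
Qed.

Lemma sign_WZ (i j c : 'I_n) : j = i.+1 :> nat -> (u i < c)%N -> (c <= u j)%N ->
  0 <= (-1) ^+ (i <= (u^-1)%g c)%N * (W i c * Z c j).
Proof.
move=> ji uic cuj; set p := (u^-1)%g c; set K := preim_lt c.
have iK : i \in K by rewrite inE.
have jK : j \notin K by rewrite inE -leqNgt.
have pK : p \notin K by rewrite inE /p permKV ltnn.
have cardK : #|K| = c := card_preim_lt (ltnW (ltn_ord c)).
have cardpK : #|p |: K| = c.+1 by rewrite cardsU1 pK cardK.
have cardjK : #|j |: K| = c.+1 by rewrite cardsU1 jK cardK.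
have [g3 [q1 [g3_incr g3_im g3q1 q1E]]] := strict_incr_enum_at cardpK (setU1r p iK).
have [g2 [q0 [g2_incr g2_im g2q0 q0E]]] := strict_incr_enum_at cardjK (setU11 j K).
have g3_preim : g3 @: setT = preim_lt c.+1 by rewrite g3_im preim_lt_succ.
have g2_lift_im : (g2 \o lift q0) @: setT = K.
  by rewrite imset_lift ?g2_im ?g2q0 ?setU1K //; apply: strict_incr_inj.
have cramer_W := minor_mul_W q1 (strict_incr_inj g3_incr) g3_preim.
rewrite g3q1 in cramer_W.
have g2_lift_K : forall q, (u (g2 (lift q0 q)) < c)%N.
  by move=> q; have := imset_f (g2 \o lift q0) (in_setT q); rewrite g2_lift_im inE.
move/minor_expand_Z: g2_lift_K; rewrite g2q0 => laplace_Z.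
have parity : odd (c + q1 + (c + q0)) = (i <= p)%N.
  rewrite q1E q0E !card_below_setU1 // ltnn addn0 ji card_below_succ iK.
  rewrite !oddD oddb (leqNgt i p) /=.
  by case: (odd c); case: (odd (card_below K i)); case: (p < i)%N.
rewrite -parity signr_odd; apply: (sign_of_cramer_pair _ _ _ _ cramer_W laplace_Z).
- exact: minor_gt0 g3_incr g3_preim.
- exact: minor_gt0 (strict_incr_lift q0 g2_incr) g2_lift_im.
- exact: minor_ge0 (strict_incr_lift q1 g3_incr).
- exact: minor_ge0 g2_incr.
Qed.

Lemma conj_nu_term_ge0 (i j c : 'I_n) : j = i.+1 :> nat ->
  0 <= ((n - (u^-1)%g c)%:R - (n - i)%:R) * (W i c * Z c j).
Proof.
move=> ji.
have -> : (n - (u^-1)%g c)%:R - (n - i)%:R = i%:R - ((u^-1)%g c)%:R :> R.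
  by rewrite !natrB ?(ltnW (ltn_ord _)) //; ring.
case: (ltngtP c (u i)) => [cui|uic|/val_inj ->]; last by rewrite permK subrr mul0r.
  by rewrite W_eq0 ?mul0r ?mulr0.
case: (leqP c (u j)) => [cuj|ujc]; last by rewrite Z_eq0 ?mulr0.
have := sign_WZ ji uic cuj.
case: leqP => [ip|pi]; rewrite ?expr1 ?expr0 ?mulN1r ?mul1r => WZ_sign.
  by rewrite mulr_le0 ?subr_le0 ?ler_nat // -oppr_ge0.
by rewrite mulr_ge0 // subr_ge0 ler_nat ltnW.
Qed.

End GaussianFactors.

Theorem lemma6p7 (R : realType) (n : nat) (u : 'S_n) (x : 'M[R]_n)
  (hx : inY_ge u x) (L D U : 'M[R]_n)
  (hLDU : gauss_LDU (x *m invmx (pmat R u)) L D U) :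
  let A := invmx (pmat R u) *m U *m pmat R u in
  0 <= str (invmx A *m nu R n *m A).
Proof.
case: hx => _ [_ [[x_unip x_tnn] _]].
rewrite /= (conj_nu x_unip hLDU) /str.
apply: sumr_ge0 => i _; apply: sumr_ge0 => j /eqP ji.
have ij : i != j by apply/eqP => eij; move: ji; rewrite eij; lia.
rewrite (mulmx_diag_entry_shift _ (n - i)%:R (mulmx_WZ x_unip hLDU) ij).
by apply: sumr_ge0 => c _; rewrite mxE; apply: (conj_nu_term_ge0 x_unip hLDU x_tnn).
Qed.
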